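(* In the setting of the context: if $\beta<\beta_{cr}$, then there is a constant $C$ (independent of $n$, $t$ and the starting state) such that for every starting magnetization $\bm s$ and every $t\ge0$, \[ \sum_{i=1}^m\mathrm{Var}_{\bm s}(S_t^{(i)})\le\frac Cn\qquad\text{and}\qquad\mathrm{Var}_{\bm s}\|\bm S_t\|_1\le\frac Cn. \] If $\beta=\beta_{cr}$, then there is a constant $C$ (independent of $n$, $t$ and the starting state) such that $\mathrm{Var}_{\bm s}\|\bm S_t\|_1\le Ct/n^2$ for every starting magnetization $\bm s$ and every $t\ge 0$.
   Context: Fix $m\ge1$, proportions $p_1,\dots,p_m>0$ with $\sum_ip_i=1$, a symmetric matrix $\mathbf K=(k_{ij})$ with all $k_{ij}>0$, and $\beta\ge0$; $n$ ranges over positive integers with $np_i\in\mathbb N$. The vertex set $V=\{1,\dots,n\}$ is partitioned into blocks $G_1,\dots,G_m$ with $|G_i|=np_i$; for $v\in G_i,w\in G_j$ put $K(v,w)=k_{ij}/n$. The Glauber dynamics $(\sigma_t)$ on $\{-1,+1\}^V$ picks at each step a uniform random vertex $v$ and sets its spin to $\pm1$ with probability $\frac{1\pm\tanh(\beta S^v)}2$, $S^v=\sum_{w\ne v}K(v,w)\sigma(w)$. The magnetization chain $\bm S_t=(S_t^{(1)},\dots,S_t^{(m)})$, $S_t^{(i)}=\frac1n\sum_{v\in G_i}\sigma_t(v)$, is a Markov chain; $\mathrm{Var}_{\bm s}$ denotes variance when it starts at $\bm s$. Let $\mathbf B=(p_ik_{ij})$, $\mathbf a>0$ its left Perron eigenvector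 normalized by $\|\mathbf a\|_1=1$, and $\beta_{cr}=(\sum_{i,j}a_ip_ik_{ij})^{-1}$. *)

From HB Require Import structures.
From mathcomp Require Import all_boot all_order all_algebra.
From mathcomp Require Import reals sequences exp.
Set Implicit Arguments. Unset Strict Implicit. Unset Printing Implicit Defensive.
Import Order.TTheory GRing.Theory Num.Theory.
Local Open Scope ring_scope.

Section Glauber.
Variable R : realType.

Definition tanhR (x : R) : R := (expR x - expR (- x)) / (expR x + expR (- x)).

(* spin configurations on V = {0,...,n-1}; true = +1, false = -1 *)
Definition conf (n : nat) := {ffun 'I_n -> bool}.
Definition spin (b : bool) : R := if b then 1 else -1.

(* g : 'I_n -> 'I_m assigns each vertex its block; K(v,w) = k (g v) (g w) / n *)
Definition Kint (m n : nat) (k : 'I_m -> 'I_m -> R) (g : 'I_n -> 'I_m)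
  (v w : 'I_n) : R := k (g v) (g w) / n%:R.

Definition locfield (m n : nat) (k : 'I_m -> 'I_m -> R) (g : 'I_n -> 'I_m)
  (s : conf n) (v : 'I_n) : R :=
  \sum_(w < n | w != v) Kint k g v w * spin (s w).

Definition glauberP (m n : nat) (beta : R) (k : 'I_m -> 'I_m -> R)
  (g : 'I_n -> 'I_m) (s t : conf n) : R :=
  \sum_(v < n) (n%:R)^-1 *
    (if [forall w : 'I_n, (w != v) ==> (t w == s w)] then
       (if t v then (1 + tanhR (beta * locfield k g s v)) / 2
        else (1 - tanhR (beta * locfield k g s v)) / 2)
     else 0).

Fixpoint glauberDist (m n : nat) (beta : R) (k : 'I_m -> 'I_m -> R)
  (g : 'I_n -> 'I_m) (tm : nat) (s : conf n) (t : conf n) : R :=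
  match tm with
  | 0 => if t == s then 1 else 0
  | tm'.+1 => \sum_(r : conf n) glauberDist beta k g tm' s r * glauberP beta k g r t
  end.

Definition Expect (m n : nat) (beta : R) (k : 'I_m -> 'I_m -> R)
  (g : 'I_n -> 'I_m) (tm : nat) (s : conf n) (f : conf n -> R) : R :=
  \sum_(t : conf n) glauberDist beta k g tm s t * f t.

Definition Var (m n : nat) (beta : R) (k : 'I_m -> 'I_m -> R)
  (g : 'I_n -> 'I_m) (tm : nat) (s : conf n) (f : conf n -> R) : R :=
  Expect beta k g tm s (fun t => (f t - Expect beta k g tm s f) ^+ 2).

Definition magn (m n : nat) (g : 'I_n -> 'I_m) (i : 'I_m) (t : conf n) : R :=
  (n%:R)^-1 * \sum_(v < n | g v == i) spin (t v).

Definition magnL1 (m n : nat) (g : 'I_n -> 'I_m) (t : conf n) : R :=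
  \sum_(i < m) `|magn g i t|.

Definition left_perron (m : nat) (p : 'I_m -> R) (k : 'I_m -> 'I_m -> R)
  (a : 'I_m -> R) : Prop :=
  (forall i, 0 < a i) /\ \sum_(i < m) a i = 1 /\
  exists lam : R, forall j, \sum_(i < m) a i * (p i * k i j) = lam * a j.

Definition beta_cr (m : nat) (p : 'I_m -> R) (k : 'I_m -> 'I_m -> R)
  (a : 'I_m -> R) : R :=
  (\sum_(i < m) \sum_(j < m) a i * p i * k i j)^-1.

Definition block_partition (m n : nat) (p : 'I_m -> R) (g : 'I_n -> 'I_m) : Prop :=
  forall i, (#|[set v | g v == i]|)%:R = n%:R * p i.

End Glauber.

Arguments tanhR {R}.
Arguments spin {R}.
Arguments Kint {R m n}.
Arguments locfield {R m n}.
Arguments glauberP {R m n}.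
Arguments glauberDist {R m n}.
Arguments Expect {R m n}.
Arguments Var {R m n}.
Arguments magn {R m n}.
Arguments magnL1 {R m n}.
Arguments left_perron {R m}.
Arguments beta_cr {R m}.
Arguments block_partition {R m n}.

(* Lipschitz contraction of the Glauber dynamics.  Weight site v by a(g v), where a is
   the left Perron vector of B = (p_i k_ij) with eigenvalue lam, and call f L-Lipschitz
   when flipping the spin at u moves f by at most L a(g u).  Since tanh is 1-Lipschitz,
   flipping u changes the update probability at v by at most beta k(g v, g u)/n, and
   sum_v a(g v) k(g v, g u) = n lam a(g u); hence one step of the chain maps L-Lipschitz
   functions to rho L-Lipschitz ones with rho = 1 - (1 - beta lam)/n, while the one-step
   conditional variance of an L-Lipschitz function is at most L^2.  The law of total
   variance then gives Var_t f <= L^2 sum_(i<t) rho^(2i).  The magnetizations and their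
   l1 norm are (2 A/n)-Lipschitz with A = sum_i 1/a_i, and beta_cr = 1/lam, so the
   geometric sum is at most n/(1 - beta lam) below criticality and equals t at it. *)

From HB Require Import structures.
From mathcomp Require Import all_boot all_order all_algebra.
From mathcomp Require Import reals sequences exp.
Import Order.TTheory GRing.Theory Num.Theory.
Local Open Scope ring_scope.
From mathcomp Require Import ring lra.
From mathcomp Require Import normedtype derive realfun.
Import numFieldNormedType.Exports.

Set Implicit Arguments.
Unset Strict Implicit.
Unset Printing Implicit Defensive.

Section Tanh.
Context {R : realType}.

Lemma tanh_bound (x : R) : -1 <= tanhR x <= 1.
Proof.
have ex := expR_gt0 x; have eNx := expR_gt0 (- x).
by rewrite /tanhR ler_pdivlMr ?ler_pdivrMr ?addr_gt0 //; apply/andP; split; lra.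
Qed.

Lemma is_derive_tanh (x : R) :
  is_derive x 1 tanhR (4 / (expR x + expR (- x)) ^+ 2).
Proof.
have c0 : expR x + expR (- x) != 0 by rewrite gt_eqF // addr_gt0 ?expR_gt0.
have hN : is_derive x 1 (fun z : R => expR (- z)) (- expR (- x)).
  by rewrite -mulrN1; apply: is_derive1_comp.
have hV : is_derive x 1 (fun z => (expR z + expR (- z))^-1)
    (- (expR x + expR (- x)) ^- 2 *: (expR x - expR (- x))).
  exact: is_deriveV.
apply: trigger_derive; rewrite /GRing.scale /= expRN.
have e0 : expR x != 0 by rewrite gt_eqF ?expR_gt0.
have e1 : expR x * expR x + 1 != 0 by rewrite gt_eqF // ltr_wpDl ?mulr_ge0 ?expR_ge0.
by field; rewrite e0 e1.
Qed.

Lemma tanh_derive_bound (x : R) : 0 <= 4 / (expR x + expR (- x)) ^+ 2 <= 1.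
Proof.
have c0 : 0 < (expR x + expR (- x)) ^+ 2 by rewrite exprn_gt0 // addr_gt0 ?expR_gt0.
apply/andP; split; first by rewrite divr_ge0 ?ltW.
rewrite ler_pdivrMr // mul1r.
have : expR x * expR (- x) = 1 by rewrite -expRD subrr expR0.
have := sqr_ge0 (expR x - expR (- x)).
nra.
Qed.

Lemma tanh_lipschitz (x y : R) : `|tanhR x - tanhR y| <= `|x - y|.
Proof.
wlog yx : x y / y < x.
  move=> W; have [/W//|xy|->] := ltgtP y x; last by rewrite !subrr normr0.
  by rewrite distrC [`|x - y|]distrC; exact: W.
have [|c _ ->] := MVT yx (fun z _ => is_derive_tanh z).
  apply: derivable_within_continuous => z _.
  by have := is_derive_tanh z; case.
rewrite normrM ler_piMl //; have /andP[c0 c1] := tanh_derive_bound c.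
by rewrite ger0_norm.
Qed.

End Tanh.

Lemma ler_sum_term (R : numDomainType) (I : finType) (F : I -> R) i :
  (forall j, 0 <= F j) -> F i <= \sum_j F j.
Proof. by move=> F_ge0; rewrite (bigD1 i) //= lerDl sumr_ge0. Qed.

Lemma sum_sqr_dev (R : comRingType) (T : finType) (d f : T -> R) (c : R) :
  \sum_t d t = 1 ->
  \sum_t d t * (f t - c) ^+ 2 =
  \sum_t d t * f t ^+ 2 - (\sum_t d t * f t) ^+ 2 + (\sum_t d t * f t - c) ^+ 2.
Proof.
move=> d1.
rewrite (eq_bigr (fun t => d t * f t ^+ 2 - (2 * c) * (d t * f t) + c ^+ 2 * d t));
  last by move=> t _; ring.
by rewrite big_split sumrB /= -!mulr_sumr d1; ring.
Qed.

Lemma sum_geom_sqr_le (R : realFieldType) (r : R) (t : nat) :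
  0 <= r < 1 -> \sum_(i < t) (r ^+ 2) ^+ i <= (1 - r)^-1.
Proof.
move=> /andP[r_ge0 r_lt1]; set S := \sum_(i < t) _.
have S_ge0 : 0 <= S by apply: sumr_ge0 => i _; rewrite exprn_ge0 ?sqr_ge0.
have telescope : (1 - r ^+ 2) * S = 1 - (r ^+ 2) ^+ t.
  by rewrite /S -[RHS]opprB (subrX1 (r ^+ 2) t); ring.
have pow_ge0 : 0 <= (r ^+ 2) ^+ t by rewrite exprn_ge0 ?sqr_ge0.
have r2_le : r ^+ 2 <= r by rewrite expr2 ler_piMr // ltW.
have r_lt : 0 < 1 - r by rewrite subr_gt0.
rewrite -(ler_pM2l r_lt) mulfV ?gt_eqF //; nra.
Qed.

Section FiniteMarkovChain.
Variables (R : realType) (T : finType) (P : T -> T -> R).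
Hypothesis P_ge0 : forall x y, 0 <= P x y.
Hypothesis P_mass : forall x, \sum_y P x y = 1.

Definition kexp (f : T -> R) (x : T) : R := \sum_y P x y * f y.

Definition kvar (f : T -> R) (x : T) : R := kexp (fun y => f y ^+ 2) x - kexp f x ^+ 2.

Fixpoint mlaw (t : nat) (s y : T) : R :=
  match t with
  | 0 => if y == s then 1 else 0
  | t'.+1 => \sum_r mlaw t' s r * P r y
  end.

Definition mexp (t : nat) (s : T) (f : T -> R) : R := \sum_y mlaw t s y * f y.

Definition mvar (t : nat) (s : T) (f : T -> R) : R :=
  mexp t s (fun y => (f y - mexp t s f) ^+ 2).

Lemma kvar_le_sqr_dev f x c : kvar f x <= kexp (fun y => (f y - c) ^+ 2) x.
Proof.
rewrite /kvar /kexp sum_sqr_dev // lerDl; exact: sqr_ge0.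
Qed.

Lemma mexp0 s f : mexp 0 s f = f s.
Proof.
rewrite /mexp (bigD1 s) //= eqxx mul1r big1 ?addr0 // => y /negbTE ->.
by rewrite mul0r.
Qed.

Lemma mexpS t s f : mexp t.+1 s f = mexp t s (kexp f).
Proof.
rewrite /mexp /kexp /=; under eq_bigr do rewrite mulr_suml.
rewrite exchange_big /=; apply: eq_bigr => r _.
by rewrite mulr_sumr; apply: eq_bigr => y _; rewrite mulrA.
Qed.

Lemma eq_mexp t s f f' : f =1 f' -> mexp t s f = mexp t s f'.
Proof. by move=> ff'; apply: eq_bigr => y _; rewrite ff'. Qed.

Lemma mexp_cst t s c : mexp t s (fun _ => c) = c.
Proof.
elim: t c => [|t IH] c; first by rewrite mexp0.
rewrite mexpS -[RHS]IH; apply: eq_mexp => x.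
by rewrite /kexp -mulr_suml P_mass mul1r.
Qed.

Lemma mlaw_ge0 t s y : 0 <= mlaw t s y.
Proof.
elim: t y => [|t IH] y /=; first by case: ifP.
by apply: sumr_ge0 => r _; apply: mulr_ge0.
Qed.

Lemma ler_mexp t s f f' : (forall y, f y <= f' y) -> mexp t s f <= mexp t s f'.
Proof. by move=> ff'; apply: ler_sum => y _; rewrite ler_wpM2l ?mlaw_ge0. Qed.

Lemma mexpB t s f f' :
  mexp t s (fun y => f y - f' y) = mexp t s f - mexp t s f'.
Proof. by rewrite /mexp -sumrB; apply: eq_bigr => y _; rewrite mulrBr. Qed.

Lemma mvarE t s f : mvar t s f = mexp t s (fun y => f y ^+ 2) - mexp t s f ^+ 2.
Proof.
have mass : \sum_y mlaw t s y = 1.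
  by rewrite -[RHS](mexp_cst t s); apply: eq_bigr => y _; rewrite mulr1.
by rewrite /mvar /mexp sum_sqr_dev // subrr expr0n addr0.
Qed.

Lemma mvarS t s f : mvar t.+1 s f = mexp t s (kvar f) + mvar t s (kexp f).
Proof. by rewrite !mvarE !mexpS /kvar mexpB; ring. Qed.

Lemma mvar_le_geometric (lip : (T -> R) -> R -> Prop) (rho : R) :
  0 <= rho ->
  (forall f L x, 0 <= L -> lip f L -> kvar f x <= L ^+ 2) ->
  (forall f L, 0 <= L -> lip f L -> lip (kexp f) (rho * L)) ->
  forall t s f L, 0 <= L -> lip f L ->
  mvar t s f <= L ^+ 2 * \sum_(i < t) (rho ^+ 2) ^+ i.
Proof.
move=> rho_ge0 kvar_le lip_kexp; elim=> [|t IH] s f L L_ge0 lip_f.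
  by rewrite mvarE !mexp0 subrr big_ord0 mulr0.
rewrite mvarS big_ord_recl expr0 mulrDr mulr1.
apply: lerD; first by rewrite -[X in _ <= X](mexp_cst t s); apply: ler_mexp => x; exact: kvar_le.
under eq_bigr => i _ do rewrite [(rho ^+ 2) ^+ _]exprS.
rewrite -mulr_sumr mulrA -exprMn [L * _]mulrC.
by apply: IH; [exact: mulr_ge0 | exact: lip_kexp].
Qed.

End FiniteMarkovChain.

Section GlauberDynamics.
Variables (R : realType) (m n : nat) (beta : R) (k : 'I_m -> 'I_m -> R).
Variable g : 'I_n -> 'I_m.

Definition upd (x : conf n) (v : 'I_n) (b : bool) : conf n :=
  [ffun w => if w == v then b else x w].

Definition flip (x : conf n) (u : 'I_n) : conf n := upd x u (~~ x u).

Lemma upd_id x v : upd x v (x v) = x.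
Proof. by apply/ffunP => w; rewrite ffunE; case: eqP => [->|]. Qed.

Lemma upd_cases x v b : upd x v b = x \/ upd x v b = flip x v.
Proof.
have [->|bx] := eqVneq b (x v); first by left; rewrite upd_id.
by right; rewrite /flip; congr upd; move: bx; case: b; case: (x v).
Qed.

Lemma upd_flip_same x u b : upd (flip x u) u b = upd x u b.
Proof. by apply/ffunP => w; rewrite !ffunE; case: eqP => // /eqP /negbTE ->. Qed.

Lemma upd_flip_comm x u v b : v != u -> upd (flip x u) v b = flip (upd x v b) u.
Proof.
move=> vu; apply/ffunP => w; rewrite !ffunE [u == v]eq_sym (negbTE vu).
by case: (w =P v) => [->|]; rewrite ?(negbTE vu).
Qed.

Lemma upd_true_flip x v : upd x v true = flip (upd x v false) v.
Proof. by apply/ffunP => w; rewrite !ffunE eqxx; case: (w == v). Qed.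

Lemma flip_other x u w : w != u -> flip x u w = x w.
Proof. by move=> wu; rewrite ffunE (negbTE wu). Qed.

Lemma flip_self x u : flip x u u = ~~ x u.
Proof. by rewrite ffunE eqxx. Qed.

Lemma spin_negb_dist (b : bool) : `|spin (~~ b) - spin b| = 2 :> R.
Proof. by case: b; rewrite /spin /= ?opprK -?opprD ?normrN ger0_norm //; lra. Qed.

Lemma sum_flip_sub (P : pred 'I_n) (h : 'I_n -> bool -> R) x u :
  \sum_(w | P w) (h w (flip x u w) - h w (x w)) =
  if P u then h u (~~ x u) - h u (x u) else 0.
Proof.
have other w : w != u -> h w (flip x u w) - h w (x w) = 0.
  by move=> wu; rewrite flip_other // subrr.
case: ifP => Pu.
  by rewrite (bigD1 u) //= big1 ?addr0 ?flip_self // => w /andP[_]; exact: other.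
by apply: big1 => w Pw; apply: other; apply: contraTneq Pw => ->; rewrite Pu.
Qed.

Lemma locfield_flip_self x u : locfield k g (flip x u) u = locfield k g x u.
Proof. by apply: eq_bigr => w wu; rewrite flip_other. Qed.

Lemma locfield_flip x u v : v != u ->
  locfield k g (flip x u) v - locfield k g x v =
  Kint k g v u * (spin (~~ x u) - spin (x u)).
Proof.
move=> vu; rewrite /locfield -sumrB.
rewrite (sum_flip_sub (fun w => w != v) (fun w b => Kint k g v w * spin b)).
by rewrite eq_sym vu mulrBr.
Qed.

Lemma magn_flip i x u :
  magn g i (flip x u) - magn g i x =
  (if g u == i then n%:R^-1 * (spin (~~ x u) - spin (x u)) else 0 : R).
Proof.
rewrite /magn -mulrBr -sumrB (sum_flip_sub (fun w => g w == i) (fun _ b => spin b : R)).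
by case: ifP; rewrite ?mulr0.
Qed.

Lemma magn_flip_le i x u : `|magn g i (flip x u) - magn g i x| <= 2 / n%:R :> R.
Proof.
rewrite magn_flip; case: ifP => _; last by rewrite normr0 divr_ge0 ?ler0n.
by rewrite normrM spin_negb_dist ger0_norm ?invr_ge0 ?ler0n // mulrC.
Qed.

Lemma magnL1_flip_le x u : `|magnL1 g (flip x u) - magnL1 g x| <= 2 / n%:R :> R.
Proof.
rewrite /magnL1 -sumrB; apply: le_trans (ler_norm_sum _ _ _) _.
rewrite (bigD1 (g u)) //= big1 ?addr0.
  exact: le_trans (ler_dist_dist _ _) (magn_flip_le _ _ _).
move=> i; rewrite eq_sym => /negbTE iu.
by move: (magn_flip i x u); rewrite iu => /eqP; rewrite subr_eq0 => /eqP ->; rewrite subrr normr0.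
Qed.

Hypothesis n_gt0 : (0 < n)%N.

Definition upprob (x : conf n) (v : 'I_n) : R := (1 + tanhR (beta * locfield k g x v)) / 2.

Definition resample (f : conf n -> R) (x : conf n) (v : 'I_n) : R :=
  upprob x v * f (upd x v true) + (1 - upprob x v) * f (upd x v false).

Lemma upprob_bound x v : 0 <= upprob x v <= 1.
Proof.
have /andP[] := tanh_bound (beta * locfield k g x v).
by rewrite /upprob => *; apply/andP; split; lra.
Qed.

Lemma glauber_kexp f x :
  kexp (glauberP beta k g) f x = n%:R^-1 * \sum_v resample f x v.
Proof.
rewrite /kexp /glauberP mulr_sumr; under eq_bigr do rewrite mulr_suml.
rewrite exchange_big /=; apply: eq_bigr => v _.
under eq_bigr do rewrite -mulrA.
rewrite -mulr_sumr; congr (_ * _).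
(* The configurations reachable by updating site v are the upd x v b, b : bool. *)
set near := fun y : conf n => [forall w, (w != v) ==> (y w == x w)].
rewrite (eq_bigr (fun y => if near y then
   (if y v then upprob x v else 1 - upprob x v) * f y else 0)); last first.
  move=> y _; rewrite /near /upprob; case: ifP => _; last by rewrite mul0r.
  by case: (y v) => //; congr (_ * _); field.
rewrite -big_mkcond /= (reindex_onto (upd x v) (fun y => y v)); last first.
  move=> y /forallP near_y; apply/ffunP => w; rewrite ffunE.
  by case: eqP => [->//|/eqP wv]; move: (near_y w); rewrite wv => /eqP.
rewrite (eq_bigl predT); last first.
  move=> b; rewrite /= ffunE !eqxx andbT; apply/forallP => w.
  by rewrite ffunE; case: (w == v); rewrite /= ?eqxx.
by rewrite big_bool /= !ffunE eqxx.
Qed.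

Lemma glauberP_ge0 x y : 0 <= glauberP beta k g x y.
Proof.
apply: sumr_ge0 => v _; rewrite mulr_ge0 ?invr_ge0 ?ler0n //.
have /andP[] := tanh_bound (beta * locfield k g x v).
by case: ifP => _ //; case: (y v) => ? ?; lra.
Qed.

Lemma glauberP_mass x : \sum_y glauberP beta k g x y = 1.
Proof.
have -> : \sum_y glauberP beta k g x y = kexp (glauberP beta k g) (fun _ => 1) x.
  by apply: eq_bigr => y _; rewrite mulr1.
rewrite glauber_kexp (eq_bigr (fun _ => 1)) => [|v _]; last by rewrite /resample !mulr1 subrKC.
by rewrite sumr_const card_ord -[_ *+ n]mulr_natr mul1r mulVf // pnatr_eq0 -lt0n.
Qed.

Lemma glauberDist_mlaw t s y :
  glauberDist beta k g t s y = mlaw (glauberP beta k g) t s y.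
Proof. by elim: t y => //= t IH y; apply: eq_bigr => r _; rewrite IH. Qed.

Lemma Var_mvar t s f : Var beta k g t s f = mvar (glauberP beta k g) t s f.
Proof.
have E h : Expect beta k g t s h = mexp (glauberP beta k g) t s h.
  by apply: eq_bigr => y _; rewrite glauberDist_mlaw.
by rewrite /Var /mvar !E.
Qed.

Lemma resample_le f x v c : (forall b, f (upd x v b) <= c) -> resample f x v <= c.
Proof.
move=> f_le; have /andP[q0 q1] := upprob_bound x v.
have := f_le true; have := f_le false; rewrite /resample; nra.
Qed.

Lemma mean_resample_le f x c : (forall v, resample f x v <= c) ->
  n%:R^-1 * \sum_v resample f x v <= c.
Proof.
move=> res_le; rewrite ler_pdivrMl ?ltr0n // mulr_natl.
by rewrite -[n in X in _ <= X]card_ord -sumr_const; apply: ler_sum.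
Qed.

Definition lipw (a : 'I_m -> R) (f : conf n -> R) (L : R) : Prop :=
  forall x u, `|f (flip x u) - f x| <= L * a (g u).

Lemma glauber_kvar_le a f L x :
  (forall i, 0 <= a i <= 1) -> 0 <= L -> lipw a f L ->
  kvar (glauberP beta k g) f x <= L ^+ 2.
Proof.
move=> a01 L_ge0 lip_f.
apply: le_trans (kvar_le_sqr_dev glauberP_mass f x (f x)) _.
rewrite glauber_kexp; apply: mean_resample_le => v; apply: resample_le => b.
have [->|->] := upd_cases x v b; first by rewrite subrr expr0n sqr_ge0.
have /andP[av0 av1] := a01 (g v).
have La_le : L * a (g v) <= L by rewrite ler_piMr.
move: (lip_f x v); rewrite ler_norml => /andP[]; nra.
Qed.

Hypothesis beta_ge0 : 0 <= beta.
Hypothesis k_ge0 : forall i j, 0 <= k i j.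

Lemma upprob_flip_le x u v : v != u ->
  `|upprob (flip x u) v - upprob x v| <= beta * k (g v) (g u) / n%:R.
Proof.
move=> vu; set h := locfield k g.
have -> : upprob (flip x u) v - upprob x v =
    (tanhR (beta * h (flip x u) v) - tanhR (beta * h x v)) / 2.
  by rewrite /upprob; field.
have := tanh_lipschitz (beta * h (flip x u) v) (beta * h x v).
rewrite -mulrBr locfield_flip // normrM (ger0_norm beta_ge0) normrM spin_negb_dist.
rewrite /Kint ger0_norm ?divr_ge0 ?k_ge0 ?ler0n // normrM [`|2^-1|]ger0_norm //; lra.
Qed.

Lemma resample_flip_self f x u : resample f (flip x u) u = resample f x u.
Proof. by rewrite /resample /upprob !upd_flip_same locfield_flip_self. Qed.

Lemma resample_flip_le a f L x u v : lipw a f L -> v != u ->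
  `|resample f (flip x u) v - resample f x v| <=
  L * a (g u) + beta * k (g v) (g u) / n%:R * (L * a (g v)).
Proof.
move=> lip_f vu; rewrite /resample !upd_flip_comm //.
set yT := upd x v true; set yF := upd x v false.
set qy := upprob (flip x u) v; set qx := upprob x v.
have /andP[qy0 qy1] : 0 <= qy <= 1 by exact: upprob_bound.
have dT : `|f (flip yT u) - f yT| <= L * a (g u) := lip_f yT u.
have dF : `|f (flip yF u) - f yF| <= L * a (g u) := lip_f yF u.
have dTF : `|f yT - f yF| <= L * a (g v) by rewrite /yT upd_true_flip; exact: lip_f.
have dq : `|qy - qx| <= beta * k (g v) (g u) / n%:R by exact: upprob_flip_le.
have -> : qy * f (flip yT u) + (1 - qy) * f (flip yF u) - (qx * f yT + (1 - qx) * f yF) =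
    (qy * (f (flip yT u) - f yT) + (1 - qy) * (f (flip yF u) - f yF))
    + (qy - qx) * (f yT - f yF) by ring.
have hT : `|qy * (f (flip yT u) - f yT)| <= qy * (L * a (g u)).
  by rewrite normrM ger0_norm // ler_wpM2l.
have hF : `|(1 - qy) * (f (flip yF u) - f yF)| <= (1 - qy) * (L * a (g u)).
  by rewrite normrM ger0_norm ?subr_ge0 // ler_wpM2l ?subr_ge0.
have hq : `|(qy - qx) * (f yT - f yF)| <= beta * k (g v) (g u) / n%:R * (L * a (g v)).
  by rewrite normrM ler_pM.
apply: le_trans (ler_normD _ _) _.
have := ler_normD (qy * (f (flip yT u) - f yT)) ((1 - qy) * (f (flip yF u) - f yF)).
lra.
Qed.

Lemma sum_block_weights (h : 'I_m -> R) p : block_partition p g ->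
  \sum_(v < n) h (g v) = n%:R * \sum_(j < m) p j * h j.
Proof.
move=> gp; rewrite (partition_big g predT) //= mulr_sumr; apply: eq_bigr => j _.
rewrite (eq_bigr (fun _ => h j)) => [|v /eqP -> //].
rewrite (eq_bigl (mem [set v | g v == j])) => [|v]; last by rewrite !inE.
by rewrite sumr_const -[LHS]mulr_natl gp mulrA.
Qed.

Lemma glauber_lipw_contract a p lam f L :
  (forall i, 0 <= a i) -> (forall j, \sum_i a i * (p i * k i j) = lam * a j) ->
  block_partition p g -> 0 <= L -> lipw a f L ->
  lipw a (kexp (glauberP beta k g) f) ((1 - (1 - beta * lam) / n%:R) * L).
Proof.
move=> a_ge0 eig gp L_ge0 lip_f x u.
have n_neq0 : n%:R != 0 :> R by rewrite pnatr_eq0 -lt0n.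
set c := L * a (g u).
pose B v := beta * k (g v) (g u) / n%:R * (L * a (g v)).
have B_ge0 v : 0 <= B v by rewrite /B !mulr_ge0 ?invr_ge0 ?ler0n.
(* The a-weighted influence of site u on all other sites is lam a(g u). *)
have sumB : \sum_v B v = beta * lam * c.
  transitivity (beta * L / n%:R * \sum_v (fun j => k j (g u) * a j) (g v)).
    by rewrite mulr_sumr; apply: eq_bigr => v _; rewrite /B; ring.
  rewrite (sum_block_weights (fun j => k j (g u) * a j) gp).
  rewrite (eq_bigr (fun i => a i * (p i * k i (g u)))) => [|i _]; last by ring.
  by rewrite eig /c; field.
have sum_off : \sum_(v | v != u) (c + B v) <= (n%:R - 1) * c + beta * lam * c.
  have sumc : \sum_(v < n) c = c + \sum_(v | v != u) c by rewrite (bigD1 u).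
  have : \sum_(v | v != u) B v <= \sum_v B v by rewrite [X in _ <= X](bigD1 u) //= lerDr.
  rewrite sumr_const card_ord -mulr_natl in sumc.
  rewrite big_split /= sumB; lra.
rewrite !glauber_kexp -mulrBr -sumrB normrM ger0_norm ?invr_ge0 ?ler0n //.
rewrite (bigD1 u) //= resample_flip_self subrr add0r.
have sum_le : `|\sum_(v | v != u) (resample f (flip x u) v - resample f x v)| <=
    \sum_(v | v != u) (c + B v).
  by apply: le_trans (ler_norm_sum _ _ _) _; apply: ler_sum => v; exact: resample_flip_le.
apply: le_trans (ler_wpM2l _ (le_trans sum_le sum_off)) _; first by rewrite invr_ge0 ler0n.
suff -> : (1 - (1 - beta * lam) / n%:R) * L * a (g u) =
    n%:R^-1 * ((n%:R - 1) * c + beta * lam * c) by [].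
by rewrite /c; field.
Qed.

Lemma glauber_var_le a p lam f L t s :
  (forall i, 0 <= a i <= 1) -> (forall j, \sum_i a i * (p i * k i j) = lam * a j) ->
  block_partition p g -> 0 <= lam -> 0 <= L -> lipw a f L ->
  Var beta k g t s f <= L ^+ 2 * \sum_(i < t) ((1 - (1 - beta * lam) / n%:R) ^+ 2) ^+ i.
Proof.
move=> a01 eig gp lam_ge0 L_ge0 lip_f.
rewrite Var_mvar; apply: (mvar_le_geometric (lip := lipw a) glauberP_ge0 glauberP_mass) => //.
- have n_ge1 : 1 <= n%:R :> R by rewrite ler1n.
  have blam_ge0 : 0 <= beta * lam by exact: mulr_ge0.
  by rewrite subr_ge0 ler_pdivrMr ?ltr0n // mul1r; lra.
- by move=> f' L' x L'_ge0 lip_f'; apply: glauber_kvar_le.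
- move=> f' L' L'_ge0 lip_f'; apply: (glauber_lipw_contract _ eig gp L'_ge0 lip_f').
  by move=> i; case/andP: (a01 i).
Qed.

Lemma lipw_of_flip_le a f c A : 0 <= c -> (forall j, 1 <= A * a j) ->
  (forall x u, `|f (flip x u) - f x| <= c) -> lipw a f (c * A).
Proof. by move=> c_ge0 Aa f_le x u; apply: le_trans (f_le x u) _; rewrite -mulrA ler_peMr. Qed.

End GlauberDynamics.

Arguments flip {n}.

Section HammingLipschitzVariance.
Variables (R : realType) (m n : nat) (beta lam A : R).
Variables (p a : 'I_m -> R) (k : 'I_m -> 'I_m -> R) (g : 'I_n -> 'I_m).
Hypotheses (n_gt0 : (0 < n)%N) (beta_ge0 : 0 <= beta) (lam_ge0 : 0 <= lam).
Hypothesis k_ge0 : forall i j, 0 <= k i j.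
Hypothesis a01 : forall i, 0 <= a i <= 1.
Hypothesis eig : forall j, \sum_i a i * (p i * k i j) = lam * a j.
Hypothesis gp : block_partition p g.
Hypotheses (A_ge0 : 0 <= A) (Aa : forall j, 1 <= A * a j).
Variable f : conf n -> R.
Hypothesis f_flip : forall x u, `|f (flip x u) - f x| <= 2 / n%:R.

Let var_le t s : Var beta k g t s f <=
  (2 / n%:R * A) ^+ 2 * \sum_(i < t) ((1 - (1 - beta * lam) / n%:R) ^+ 2) ^+ i.
Proof.
apply: glauber_var_le => //; first by rewrite mulr_ge0 ?divr_ge0 ?ler0n.
by apply: lipw_of_flip_le; rewrite ?divr_ge0 ?ler0n.
Qed.

Lemma var_le_subcritical t s : 0 < 1 - beta * lam ->
  Var beta k g t s f <= 4 * A ^+ 2 / (1 - beta * lam) / n%:R.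
Proof.
set e := 1 - beta * lam => e_gt0; apply: le_trans (var_le t s) _.
have n_ge1 : 1 <= n%:R :> R by rewrite ler1n.
have e_le1 : e <= 1 by rewrite /e lerBlDr lerDl mulr_ge0.
have rho01 : 0 <= 1 - e / n%:R < 1.
  by rewrite subr_ge0 ltrBlDr ltrDl divr_gt0 ?ltr0n // andbT ler_pdivrMr ?ltr0n // mul1r; lra.
rewrite -/e; apply: le_trans (ler_wpM2l (sqr_ge0 _) (sum_geom_sqr_le t rho01)) _.
rewrite le_eqVlt; apply/orP; left; apply/eqP.
by field; rewrite gt_eqF ?ltr0n // gt_eqF.
Qed.

Lemma var_le_critical t s : beta * lam = 1 ->
  Var beta k g t s f <= 4 * A ^+ 2 * t%:R / n%:R ^+ 2.
Proof.
move=> crit; apply: le_trans (var_le t s) _.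
rewrite crit subrr mul0r subr0 expr1n (eq_bigr (fun _ => 1)) => [|i _]; last by rewrite expr1n.
rewrite sumr_const card_ord le_eqVlt; apply/orP; left; apply/eqP.
by rewrite -mulr_natr; field; rewrite gt_eqF ?ltr0n.
Qed.

End HammingLipschitzVariance.

Section LeftPerronVector.
Variables (R : realType) (m : nat) (p a : 'I_m -> R) (k : 'I_m -> 'I_m -> R) (lam : R).
Hypothesis a_gt0 : forall i, 0 < a i.
Hypothesis eig : forall j, \sum_i a i * (p i * k i j) = lam * a j.

Lemma perron_eigenvalue_gt0 : (0 < m)%N -> (forall i, 0 < p i) -> (forall i j, 0 < k i j) ->
  0 < lam.
Proof.
move=> m_gt0 p_gt0 k_gt0; pose j : 'I_m := Ordinal m_gt0.
have : 0 < \sum_i a i * (p i * k i j).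
  rewrite (bigD1 j) //= ltr_pwDl ?mulr_gt0 //.
  by apply: sumr_ge0 => i _; rewrite ltW ?mulr_gt0.
by rewrite eig pmulr_lgt0.
Qed.

Lemma beta_cr_perron : \sum_i a i = 1 -> beta_cr p k a = lam^-1.
Proof.
move=> a_sum; congr (_^-1); rewrite exchange_big /=.
rewrite (eq_bigr (fun j => lam * a j)) => [|j _]; first by rewrite -mulr_sumr a_sum mulr1.
by rewrite -eig; apply: eq_bigr => i _; rewrite mulrA.
Qed.

End LeftPerronVector.

Lemma exists_inv_bound (R : numFieldType) (I : finType) (a : I -> R) :
  (forall i, 0 < a i) -> exists2 A, 0 <= A & forall j, 1 <= A * a j.
Proof.
move=> a_gt0; exists (\sum_i (a i)^-1); first by rewrite sumr_ge0 // => i _; rewrite invr_ge0 ltW.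
move=> j; rewrite -[1](mulVf (lt0r_neq0 (a_gt0 j))); apply: ler_wpM2r; first exact: ltW.
by apply: ler_sum_term => i; rewrite invr_ge0 ltW.
Qed.

Theorem proposition4p11 (R : realType) (m : nat) (p : 'I_m -> R)
  (k : 'I_m -> 'I_m -> R) (beta : R) (a : 'I_m -> R) :
  (0 < m)%N ->
  (forall i, 0 < p i) -> \sum_(i < m) p i = 1 ->
  (forall i j, k i j = k j i) -> (forall i j, 0 < k i j) ->
  0 <= beta ->
  left_perron p k a ->
  (beta < beta_cr p k a ->
   exists C : R, forall (n : nat) (g : 'I_n -> 'I_m),
     (0 < n)%N -> block_partition p g ->
     forall (s : conf n) (t : nat),
       \sum_(i < m) Var beta k g t s (magn g i) <= C / n%:R /\
       Var beta k g t s (magnL1 g) <= C / n%:R) /\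
  (beta = beta_cr p k a ->
   exists C : R, forall (n : nat) (g : 'I_n -> 'I_m),
     (0 < n)%N -> block_partition p g ->
     forall (s : conf n) (t : nat),
       Var beta k g t s (magnL1 g) <= C * t%:R / (n%:R ^+ 2)).
Proof.
move=> m_gt0 p_gt0 _ _ k_gt0 beta_ge0 [a_gt0 [a_sum [lam eig]]].
have lam_gt0 := perron_eigenvalue_gt0 a_gt0 eig m_gt0 p_gt0 k_gt0.
have k_ge0 i j : 0 <= k i j by exact: ltW.
have a01 i : 0 <= a i <= 1 by rewrite ltW //= -a_sum ler_sum_term // => j; exact: ltW.
have [A A_ge0 Aa] := exists_inv_bound a_gt0.
rewrite (beta_cr_perron eig a_sum); split => [beta_lt | beta_eq].
- have e_gt0 : 0 < 1 - beta * lam.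
    by rewrite subr_gt0 -(mulVf (lt0r_neq0 lam_gt0)) ltr_pM2r.
  exists (m%:R * (4 * A ^+ 2 / (1 - beta * lam))) => n g n_gt0 gp s t.
  have var_le := var_le_subcritical n_gt0 beta_ge0 (ltW lam_gt0) k_ge0 a01 eig gp A_ge0 Aa.
  split.
    rewrite -[m%:R * _ / _]mulrA -[m in m%:R]card_ord mulr_natl -sumr_const.
    apply: ler_sum => i _.
    exact: var_le (magn_flip_le R g i) t s e_gt0.
  apply: le_trans (var_le _ (magnL1_flip_le R g) t s e_gt0) _.
  rewrite -[m%:R * _ / _]mulrA ler_peMl ?ler1n //.
  by rewrite !divr_ge0 ?mulr_ge0 ?sqr_ge0 ?ler0n // ltW.
- exists (4 * A ^+ 2) => n g n_gt0 gp s t.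
  have crit : beta * lam = 1 by rewrite beta_eq mulVf ?gt_eqF.
  exact: var_le_critical n_gt0 beta_ge0 (ltW lam_gt0) k_ge0 a01 eig gp A_ge0 Aa _
    (magnL1_flip_le R g) t s crit.
Qed.
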